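(* Let $L \in K[D]$ with $\operatorname{ord}(L)=d$ and $\operatorname{Sym}_L = S_1 S_2$, where $S_1,S_2$ are homogeneous of degrees $d_1,d_2$, and let $S_0=\gcd(S_1,S_2)$ be homogeneous of degree $d_0$. Then for every partial factorization $F_1\circ F_2$ of $L$ of order $d-d_0$ and of type $(S_1)(S_2)$, there is at most one factorization $L=F_1'\circ F_2'$ of type $(S_1)(S_2)$ which is an extension of $F_1\circ F_2$, i.e. satisfies $\operatorname{ord}(F_i-F_i')<(d-d_0)-(d-d_i)$ for $i=1,2$.
   Context: $K$ is a field with commuting derivations $\partial_1,\dots,\partial_n$, and $K[D]=K[D_1,\dots,D_n]$ is the ring of linear differential operators over $K$: the $D_i$ commute with each other and $D_i\circ a = aD_i+\partial_i(a)$ for $a\in K$. Every $L\in K[D]$ is uniquely $L=\sum_{|J|\le d} a_J D^J$ with $a_J\in K$, $D^J=D_1^{j_1}\cdots D_n^{j_n}$, $|J|=j_1+\dots+j_n$. The order $\operatorname{ord}(L)$ is the largest $|J|$ with $a_J\neq 0$, and $\operatorname{ord}(0)=-\infty$. The symbol $\operatorname{Sym}_L\in K[X_1,\dots,X_n]$ is the homogeneous polynomial $\sum_{|J|=\operatorname{ord}L} a_J X^J$. If $\operatorname{Sym}_L=S_1\cdots S_k$ with homogeneous $S_i$, a factorization of type $(S_1)\cdots(S_k)$ is an equality $L=F_1\circ\cdots\circ F_k$ with $\operatorname{Sym}_{F_i}=S_i$. For $t\in\{0,\dots,\operatorname{ord}L\}$, a partial factorization of $L$ of order $t$ is a composition $F_1\circ\cdots\circ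 F_k$ with $\operatorname{ord}(L-F_1\circ\cdots\circ F_k)<t$; it is of type $(S_1)\cdots(S_k)$ if $\operatorname{Sym}_{F_i}=S_i$ for all $i$. If $d_i=\deg S_i$, $d=\operatorname{ord}L$, and $F_1\circ\cdots\circ F_k$, $F_1'\circ\cdots\circ F_k'$ are partial factorizations of orders $t$ and $t'<t$, then the latter is an extension of the former if $\operatorname{ord}(F_i-F_i')<t-(d-d_i)$ for all $i$. A (complete) factorization is a partial factorization of order $0$. *)

From HB Require Import structures.
From mathcomp Require Import all_boot all_order all_algebra.
From mathcomp Require Import mpoly.
Set Implicit Arguments.
Unset Strict Implicit.
Unset Printing Implicit Defensive.
Import Order.TTheory GRing.Theory.
Local Open Scope ring_scope.

(* An operator L = sum_J a_J D^J is encoded by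
   its coefficient family, i.e. by the mpoly sum_J a_J X^J (this is the
   K-module structure of K[D]); the (non-commutative) composition is given by
   [dcomp] below (Leibniz rule), NOT by the product of {mpoly K[n]}. *)

Definition is_comm_derivations (K : fieldType) (n : nat) (der : 'I_n -> K -> K) :=
  [/\ forall i a b, der i (a + b) = der i a + der i b,
      forall i a b, der i (a * b) = der i a * b + a * der i b
    & forall i j a, der i (der j a) = der j (der i a)].

Section DiffOp.
Variables (K : fieldType) (n : nat) (der : 'I_n -> K -> K).

Definition derI (I : 'X_{1..n}) (a : K) : K :=
  foldr (fun i x => iter (I i) (der i) x) a (enum 'I_n).

Definition mbin (J I : 'X_{1..n}) : nat := (\prod_(i < n) 'C(J i, I i))%N.

(* composition P o Q:  (a_J D^J) o (b_M D^M)
      = sum_{I <= J} a_J C(J,I) d^I(b_M) D^{J - I + M} *)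
Definition dcomp (P Q : {mpoly K[n]}) : {mpoly K[n]} :=
  \sum_(J <- msupp P) \sum_(M <- msupp Q)
    \sum_(I : 'X_{1..n < (mdeg J).+1} | (val I <= J)%MM)
      (P@_J * (mbin J (val I))%:R * derI (val I) (Q@_M)) *: 'X_[(J - val I) + M].

End DiffOp.

Section OrdSym.
Variables (K : fieldType) (n : nat).

(* ord(P) as a natural number (meaningful for P != 0) *)
Definition dord (P : {mpoly K[n]}) : nat := (msize P).-1.

(* ord(P) < t, with the convention ord(0) = -oo *)
Definition ord_lt (P : {mpoly K[n]}) (t : int) : bool :=
  (P == 0) || ((dord P)%:Z < t).

Definition Sym (P : {mpoly K[n]}) : {mpoly K[n]} :=
  \sum_(m <- msupp P | mdeg m == dord P) P@_m *: 'X_[m].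

Definition mdvd (A B : {mpoly K[n]}) : Prop := exists C, B = C * A.
Definition is_gcd (G A B : {mpoly K[n]}) : Prop :=
  [/\ mdvd G A, mdvd G B & forall H, mdvd H A -> mdvd H B -> mdvd H G].

End OrdSym.

From mathcomp Require Import all_boot all_order all_algebra.
From mathcomp Require Import mpoly ssrcomplements.
From Stdlib Require Import Classical ClassicalEpsilon.
From mathcomp Require Import ring zify.
Set Implicit Arguments. Unset Strict Implicit. Unset Printing Implicit Defensive.
Import GRing.Theory.
Local Open Scope ring_scope.

(* Let G1 o G2 and G1' o G2' be two extensions. The differences P1 = G1 - G1' and
   P2 = G2 - G2' satisfy P1 o G2 + G1' o P2 = 0, and ord P1 < d1 - d0 because both
   G1 and G1' are close to F1. Composition multiplies top homogeneous parts, so the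
   component of largest degree of that equation reads X S2 + S1 Y = 0, where X and Y
   are homogeneous parts of P1 and P2, one of them being a symbol. Since
   K[X_1, ..., X_n] is factorial, S1 / S0 and S2 / S0 are coprime, so S1 / S0, of
   degree d1 - d0, divides X; hence X = 0 and Y = 0, so P1 = 0 or P2 = 0. As the
   symbol of a composition is the product of the symbols, the other one vanishes
   as well. Factoriality is proved by induction on n through Gauss's lemma. *)

Lemma ex_minimal (T : Type) (P : T -> Prop) (m : T -> nat) :
  (exists x, P x) -> exists x, P x /\ forall y, P y -> (m x <= m y)%N.
Proof.
move=> [x Px].
suff min_below k : forall z, P z -> (m z <= k)%N ->
    exists x, P x /\ forall y, P y -> (m x <= m y)%N by exact: min_below _ x Px (leqnn _).
elim: k => [|k IHk] z Pz le_zk.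
  by exists z; split=> // y _; move: le_zk; rewrite leqn0 => /eqP ->.
have [[y [Py le_yk]]|no_y] := classic (exists y, P y /\ (m y <= k)%N).
  exact: IHk Py le_yk.
exists z; split=> // y Py; rewrite leqNgt; apply/negP => lt_yz.
by apply: no_y; exists y; split=> //; rewrite -ltnS (leq_trans lt_yz).
Qed.

(** * Factorial domains *)

Section Divisibility.
Variable R : idomainType.
Implicit Types a b c u : R.

Definition dvdr a b := exists c, b = c * a.

Definition irreducible_elt a :=
  [/\ a != 0, a \isn't a GRing.unit
    & forall b c, a = b * c -> b \is a GRing.unit \/ c \is a GRing.unit].

Definition prime_elt a :=
  [/\ a != 0, a \isn't a GRing.unit
    & forall b c, dvdr a (b * c) -> dvdr a b \/ dvdr a c].

Definition ufd := forall a, a != 0 -> exists u (s : seq R),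
  [/\ u \is a GRing.unit, forall q, q \in s -> prime_elt q
    & a = u * \prod_(q <- s) q].

Lemma dvdr_refl a : dvdr a a. Proof. by exists 1; rewrite mul1r. Qed.

Lemma dvdr_trans a b c : dvdr a b -> dvdr b c -> dvdr a c.
Proof. by move=> [x ->] [y ->]; exists (y * x); rewrite mulrA. Qed.

Lemma dvdr_mull a b c : dvdr a b -> dvdr a (c * b).
Proof. by move=> [x ->]; exists (c * x); rewrite mulrA. Qed.

Lemma dvdr_mulr a b c : dvdr a b -> dvdr a (b * c).
Proof. by rewrite mulrC; apply: dvdr_mull. Qed.

Lemma dvdr0 a : dvdr a 0. Proof. by exists 0; rewrite mul0r. Qed.

Lemma dvdrB a b c : dvdr a b -> dvdr a c -> dvdr a (b - c).
Proof. by move=> [x ->] [y ->]; exists (x - y); rewrite mulrBl. Qed.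

Lemma dvdr_sum a (I : Type) (r : seq I) (P : pred I) (F : I -> R) :
  (forall i, P i -> dvdr a (F i)) -> dvdr a (\sum_(i <- r | P i) F i).
Proof.
move=> dvdF; apply: (big_ind (dvdr a)) => [|b c [x ->] [y ->]|//].
  exact: dvdr0.
by exists (x + y); rewrite mulrDl.
Qed.

Lemma unit_dvdr u a : u \is a GRing.unit -> dvdr u a.
Proof. by move=> Uu; exists (a / u); rewrite divrK. Qed.

Lemma dvdr1 a : dvdr a 1 <-> a \is a GRing.unit.
Proof.
split; last exact: unit_dvdr.
by move=> [c c_a]; apply/unitrPr; exists c; rewrite mulrC c_a.
Qed.

Lemma dvdr_mul2l a b c : a != 0 -> dvdr (a * b) (a * c) -> dvdr b c.
Proof. by move=> a0 [x ax]; exists x; apply: (mulfI a0); rewrite ax mulrCA. Qed.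

Lemma prime_elt_unitl u q :
  u \is a GRing.unit -> prime_elt q -> prime_elt (u * q).
Proof.
move=> Uu [q0 Nuq q_prime]; split.
- by rewrite mulf_neq0 //; apply: contraTneq Uu => ->; rewrite unitr0.
- by rewrite unitrM negb_and Nuq orbT.
move=> b c /(dvdr_trans (dvdr_mull u (dvdr_refl q))) /q_prime.
by case=> [[x ->]|[x ->]]; [left|right]; exists (x / u); rewrite mulrA divrK.
Qed.

Lemma ufd_measure (N : R -> nat) :
  (forall a b, a != 0 -> b != 0 -> N (a * b) = (N a + N b)%N) ->
  (forall a, a != 0 -> N a = 0%N -> a \is a GRing.unit) ->
  (forall a, irreducible_elt a -> prime_elt a) -> ufd.
Proof.
move=> NM N0_unit irr_prime.
suff factor k a : (N a <= k)%N -> a != 0 -> exists u (s : seq R),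
    [/\ u \is a GRing.unit, forall q, q \in s -> prime_elt q
      & a = u * \prod_(q <- s) q] by move=> a; apply: factor.
elim: k a => [|k IHk] a le_ak a0.
  exists a, [::]; rewrite big_nil mulr1; split=> //.
  by apply: N0_unit a0 _; apply/eqP; rewrite -leqn0.
have [Ua|Nua] := boolP (a \is a GRing.unit).
  by exists a, [::]; rewrite big_nil mulr1.
have [a_irr|Na_irr] := classic (irreducible_elt a).
  exists 1, [:: a]; rewrite unitr1 big_seq1 mul1r; split=> // q.
  by rewrite inE => /eqP ->; apply: irr_prime.
have [b [c [a_bc Nub Nuc]]] : exists b c,
    [/\ a = b * c, b \isn't a GRing.unit & c \isn't a GRing.unit].
  apply: NNPP => no_bc; apply: Na_irr; split=> // b c a_bc.
  apply: NNPP => /not_or_and[/negP Nub /negP Nuc]; apply: no_bc.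
  by exists b, c.
have b0 : b != 0 by apply: contraNneq a0 => b0; rewrite a_bc b0 mul0r.
have c0 : c != 0 by apply: contraNneq a0 => c0; rewrite a_bc c0 mulr0.
have Nb : (0 < N b)%N by rewrite lt0n; apply: contra Nub => /eqP; apply: N0_unit.
have Nc : (0 < N c)%N by rewrite lt0n; apply: contra Nuc => /eqP; apply: N0_unit.
move: le_ak; rewrite a_bc NM // => le_bck.
have [|ub [sb [Uub sb_prime ->]]] := IHk b _ b0; first lia.
have [|uc [sc [Uuc sc_prime ->]]] := IHk c _ c0; first lia.
exists (ub * uc), (sb ++ sc); rewrite unitrM Uub Uuc big_cat mulrACA.
by split=> // q; rewrite mem_cat => /orP[/sb_prime|/sc_prime].
Qed.

Hypothesis R_ufd : ufd.

Lemma ufd_gauss a b x : a != 0 ->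
  (forall c, dvdr c a -> dvdr c b -> c \is a GRing.unit) ->
  dvdr a (x * b) -> dvdr a x.
Proof.
move=> /R_ufd[u [s [Uu s_prime ->]]].
elim: s s_prime x => [|q s IHs] s_prime x coprime_ab.
  by rewrite big_nil mulr1 => _; apply: unit_dvdr.
rewrite big_cons mulrCA in coprime_ab * => a_xb.
have [q0 Nuq q_prime] := s_prime q (mem_head _ _).
have [[y x_yq]|q_b] := q_prime _ _ (dvdr_trans (dvdr_mulr _ (dvdr_refl q)) a_xb).
  have [z y_za] : dvdr (u * \prod_(p <- s) p) y.
  - apply: IHs => [p ps|c c_a c_b|].
    + by apply: s_prime; rewrite inE ps orbT.
    + exact: coprime_ab (dvdr_mull _ c_a) c_b.
    by apply: (dvdr_mul2l q0); rewrite [q * (y * b)]mulrA [q * y]mulrC -x_yq.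
  by exists z; rewrite x_yq y_za; ring.
by case/negP: Nuq; apply: coprime_ab q_b; apply: dvdr_mulr; apply: dvdr_refl.
Qed.

Lemma ufd_irreducible_prime a : irreducible_elt a -> prime_elt a.
Proof.
move=> [a0 Nua a_irr]; have [u [s [Uu s_prime a_us]]] := R_ufd a0.
case: s s_prime a_us => [|q s] s_prime.
  by rewrite big_nil mulr1 => a_u; rewrite a_u Uu in Nua.
rewrite big_cons mulrCA mulrC => a_eq; have q_prime := s_prime q (mem_head _ _).
case: (a_irr _ _ a_eq) => [Uv|Uq]; last by case: q_prime => _ /negP.
by rewrite a_eq; apply: prime_elt_unitl.
Qed.

End Divisibility.

(** * Gauss's lemma *)

Section PolyOverUfd.
Variable R : idomainType.
Implicit Types (a c : R) (f g h p : {poly R}).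

Lemma polyC_unitE c : (c%:P \is a GRing.unit) = (c \is a GRing.unit).
Proof.
rewrite poly_unitE coefC /= size_polyC.
by have [->|c0] := eqVneq c 0; rewrite ?unitr0 ?andbF ?c0.
Qed.

Lemma dvdr_polyCP c f : dvdr c%:P f <-> forall i, dvdr c f`_i.
Proof.
split=> [[g ->] i|dvd_coef]; first by rewrite coefMC; exists g`_i.
pose q i := proj1_sig (constructive_indefinite_description _ (dvd_coef i)).
have fE i : f`_i = q i * c.
  by rewrite /q; case: constructive_indefinite_description.
exists (\poly_(i < size f) q i); apply/polyP => i.
rewrite coefMC coef_poly; case: ltnP => // le_fi.
by rewrite mul0r nth_default.
Qed.

Lemma prime_elt_polyC c : prime_elt c -> prime_elt c%:P.
Proof.
move=> [c0 Nuc c_prime]; split; first by rewrite polyC_eq0.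
  by rewrite polyC_unitE.
(* With [i], [j] minimal such that [c] divides neither [f_i] nor [g_j], [c]
   divides every term of the coefficient [i + j] of [f g] except [f_i g_j]. *)
move=> f g c_fg; apply: NNPP => /not_or_and[/dvdr_polyCP Nc_f /dvdr_polyCP Nc_g].
have [i [Nc_fi min_i]] : exists i, ~ dvdr c f`_i /\ forall k, ~ dvdr c f`_k -> (i <= k)%N.
  apply: (@ex_minimal _ (fun k => ~ dvdr c f`_k) id).
  by apply: NNPP => /not_ex_all_not Nf; apply: Nc_f => k; apply: NNPP.
have [j [Nc_gj min_j]] : exists j, ~ dvdr c g`_j /\ forall k, ~ dvdr c g`_k -> (j <= k)%N.
  apply: (@ex_minimal _ (fun k => ~ dvdr c g`_k) id).
  by apply: NNPP => /not_ex_all_not Ng; apply: Nc_g => k; apply: NNPP.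
have lt_i_ij : (i < (i + j).+1)%N by rewrite ltnS leq_addr.
have := proj1 (dvdr_polyCP c (f * g)) c_fg (i + j)%N.
rewrite coefM (bigD1 (Ordinal lt_i_ij)) //= addKn.
set rest := \sum_(k | _) _ => c_sum.
have c_rest : dvdr c rest.
  apply: dvdr_sum => k ne_ki.
  have {}ne_ki : (k : nat) != i by apply: contraNneq ne_ki => eq_ki; apply/eqP/val_inj.
  have [lt_ki|le_ik] := ltnP k i.
    by apply: dvdr_mulr; apply: NNPP => /min_i; rewrite leqNgt lt_ki.
  have lt_ik : (i < k)%N by rewrite ltn_neqAle eq_sym ne_ki.
  apply: dvdr_mull; apply: NNPP => /min_j; rewrite leqNgt => /negP; apply.
  by have := ltn_ord k; rewrite ltnS; lia.
have c_figj : dvdr c (f`_i * g`_j) by rewrite -(addrK rest (f`_i * g`_j)); apply: dvdrB.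
by case: (c_prime _ _ c_figj).
Qed.

Hypothesis R_ufd : ufd R.

Lemma dvdr_polyC_mul c f g : c != 0 -> dvdr c%:P (f * g) ->
  exists c1 c2, [/\ c = c1 * c2, dvdr c1%:P f & dvdr c2%:P g].
Proof.
move=> /R_ufd[u [s [Uu s_prime ->]]].
elim: s s_prime f g => [|q s IHs] s_prime f g.
  move=> _; exists u, 1; rewrite big_nil !mulr1; split=> //.
    by apply: unit_dvdr; rewrite polyC_unitE.
  by exists g; rewrite mulr1.
have s'_prime (r : R) : r \in s -> prime_elt r by move=> rs; apply: s_prime; rewrite inE rs orbT.
have [q0 _ q_prime] := prime_elt_polyC (s_prime q (mem_head _ _)).
rewrite big_cons => c_fg.
have cancel_q f' g' : f * g = q%:P * (f' * g') -> dvdr (u * \prod_(r <- s) r)%:P (f' * g').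
  move=> fg_eq; apply: (dvdr_mul2l q0); rewrite -fg_eq.
  by have -> : q%:P * (u * \prod_(r <- s) r)%:P = (u * (q * \prod_(r <- s) r))%:P
    by rewrite !polyCM; ring.
have q_c : dvdr q%:P (u * (q * \prod_(r <- s) r))%:P.
  by exists (u * \prod_(r <- s) r)%:P; rewrite -polyCM mulrCA mulrC.
have [[f' f_eq]|[g' g_eq]] := q_prime _ _ (dvdr_trans q_c c_fg).
- have [|c1 [c2 [c_eq [h1 f'_eq] c2_g]]] := IHs s'_prime f' g _.
    by apply: cancel_q; rewrite f_eq; ring.
  exists (c1 * q), c2; split=> //; first by rewrite mulrCA c_eq; ring.
  by exists h1; rewrite f_eq f'_eq polyCM; ring.
- have [|c1 [c2 [c_eq c1_f [h2 g'_eq]]]] := IHs s'_prime f g' _.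
    by apply: cancel_q; rewrite g_eq; ring.
  exists c1, (c2 * q); split=> //; first by rewrite mulrCA c_eq; ring.
  by exists h2; rewrite g_eq g'_eq polyCM; ring.
Qed.

Definition primitive_poly p := forall c, dvdr c%:P p -> c \is a GRing.unit.

Lemma primitive_dvdr_mulCl p c f : primitive_poly p -> c != 0 ->
  dvdr p (c%:P * f) -> dvdr p f.
Proof.
move=> p_prim c0 [h cf_hp].
have c_hp : dvdr c%:P (h * p) by exists f; rewrite -cf_hp mulrC.
have [c1 [c2 [c_eq [h' h_eq] /p_prim Uc2]]] := dvdr_polyC_mul c0 c_hp.
have c10 : c1%:P != 0.
  by rewrite polyC_eq0; apply: contraNneq c0 => c10; rewrite c_eq c10 mul0r.
have f_eq : c2%:P * f = h' * p.
  apply: (mulfI c10); transitivity (c%:P * f); first by rewrite c_eq polyCM mulrA.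
  by rewrite cf_hp h_eq; ring.
by exists (c2^-1%:P * h'); rewrite -mulrA -f_eq mulrA -polyCM mulVr // mul1r.
Qed.

Lemma unit_poly_size f : f \is a GRing.unit -> size f = 1%N.
Proof. by rewrite poly_unitE => /andP[/eqP]. Qed.

Lemma irreducible_primitive p : irreducible_elt p -> (1 < size p)%N -> primitive_poly p.
Proof.
move=> [p0 _ p_irr] p_gt1 c [q p_eq].
have [/unit_poly_size q1|] := p_irr _ _ p_eq; last by rewrite polyC_unitE.
have q0 : q != 0 by apply: contraNneq p0 => q0; rewrite p_eq q0 mul0r.
have c0 : c != 0 by apply: contraNneq p0 => c0; rewrite p_eq c0 mulr0.
by move: p_gt1; rewrite p_eq size_mul ?polyC_eq0 // q1 size_polyC c0.
Qed.

Lemma irreducible_dvdr_scale_mul p h q k : irreducible_elt p -> (1 < size p)%N ->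
  (1 < size h)%N -> lead_coef h ^+ k *: p = q * h -> dvdr p h.
Proof.
move=> p_irr p_gt1 h_gt1; rewrite -mul_polyC => lc_p.
have h0 : h != 0 by rewrite -size_poly_gt0 ltnW.
have lc0 : lead_coef h ^+ k != 0 by rewrite expf_neq0 // lead_coef_eq0.
have [|c1 [c2 [lc_eq [q' q_eq] [h' h_eq]]]] := dvdr_polyC_mul lc0 (_ : dvdr _ (q * h)).
  by rewrite -lc_p; exists p; rewrite mulrC.
have c0 : (c1 * c2)%:P != 0 by rewrite -lc_eq polyC_eq0.
have p_eq : p = q' * h'.
  apply: (mulfI c0); transitivity (q * h); first by rewrite -lc_p lc_eq.
  by rewrite q_eq h_eq polyCM; ring.
have [_ _ /(_ _ _ p_eq)] := p_irr; case=> [/dvdr1[z zq1]|/unit_poly_size h'1].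
  exists (z * c2%:P); rewrite h_eq p_eq.
  by transitivity (z * q' * h' * c2%:P); [rewrite -zq1 mul1r | ring].
have c20 : c2 != 0 by apply: contraNneq c0 => ->; rewrite mulr0 polyC0 eqxx.
have h'0 : h' != 0 by apply: contraNneq h0 => h'0; rewrite h_eq h'0 mul0r.
by move: h_gt1; rewrite h_eq size_mul ?polyC_eq0 // h'1 size_polyC c20.
Qed.

Definition in_ideal2 p f h := exists u v : {poly R}, h = u * p + v * f.

(* The pseudo-remainder by [h] stays in the ideal and is smaller than [h]. *)
Lemma minimal_in_ideal2_divides p f h : h != 0 -> in_ideal2 p f h ->
  (forall h', h' != 0 /\ in_ideal2 p f h' -> (size h <= size h')%N) ->
  forall x, in_ideal2 p f x -> exists k, lead_coef h ^+ k *: x = x %/ h * h.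
Proof.
move=> h0 [u [v h_eq]] h_min x [a [b x_eq]].
exists (scalp x h); rewrite Pdiv.Idomain.divp_eq; suff -> : x %% h = 0 by rewrite addr0.
apply/eqP; apply: contraT => r0.
pose k := lead_coef h ^+ scalp x h.
have r_eq : x %% h = (k *: a - x %/ h * u) * p + (k *: b - x %/ h * v) * f.
  rewrite -[x %% h](addKr (x %/ h * h)) -Pdiv.Idomain.divp_eq -/k.
  by move: (x %/ h) k => q c; rewrite [in q * h]h_eq [in c *: x]x_eq -!mul_polyC; ring.
have := h_min _ (conj r0 (ex_intro _ _ (ex_intro _ _ r_eq))).
by rewrite leqNgt Pdiv.Idomain.ltn_modpN0.
Qed.

Lemma irreducible_elt_polyC c : irreducible_elt c%:P -> irreducible_elt c.
Proof.
move=> [c0 Nuc c_irr]; split; first by rewrite -polyC_eq0.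
  by rewrite -polyC_unitE.
by move=> a b c_ab; rewrite -!polyC_unitE; apply: c_irr; rewrite c_ab polyCM.
Qed.

(* Let [h] be of minimal size in the ideal [(p, f)]. If [h] is constant, then [p]
   divides [h g], hence [g]; otherwise [p] divides [h], which divides a multiple
   of [f]. *)
Lemma poly_irreducible_prime p : irreducible_elt p -> prime_elt p.
Proof.
move=> p_irr; have [p0 Nup _] := p_irr.
have [p_le1|p_gt1] := leqP (size p) 1.
  rewrite (size1_polyC p_le1) in p_irr *.
  exact/prime_elt_polyC/ufd_irreducible_prime/irreducible_elt_polyC.
have p_prim := irreducible_primitive p_irr p_gt1.
split=> // f g p_fg; apply: NNPP => /not_or_and[Np_f Np_g].
have [h [[h0 h_ideal] h_min]] : exists h, (h != 0 /\ in_ideal2 p f h)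
    /\ forall h', h' != 0 /\ in_ideal2 p f h' -> (size h <= size h')%N.
  by apply: ex_minimal; exists p; split=> //; exists 1, 0; rewrite mul1r mul0r addr0.
have scaled_dvd := minimal_in_ideal2_divides h0 h_ideal h_min.
have lc0 k : lead_coef h ^+ k != 0 by rewrite expf_neq0 // lead_coef_eq0.
have [h_le1|h_gt1] := leqP (size h) 1.
  apply: Np_g; apply: (primitive_dvdr_mulCl (c := h`_0) p_prim).
    by rewrite -[h`_0]lead_coefC -(size1_polyC h_le1) lead_coef_eq0.
  have [[u [v h_eq]] [w fg_eq]] := (h_ideal, p_fg); exists (u * g + v * w).
  rewrite -(size1_polyC h_le1) h_eq.
  by transitivity (u * g * p + v * (f * g)); [ring | rewrite fg_eq; ring].
have [|k1 lc_p] := scaled_dvd p; first by exists 1, 0; rewrite mul1r mul0r addr0.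
have p_h := irreducible_dvdr_scale_mul p_irr p_gt1 h_gt1 lc_p.
have [|k2 lc_f] := scaled_dvd f; first by exists 0, 1; rewrite mul1r mul0r add0r.
apply: Np_f; apply: (primitive_dvdr_mulCl p_prim (lc0 k2)).
by rewrite mul_polyC lc_f; apply: dvdr_mull.
Qed.

End PolyOverUfd.

(** * Multivariate polynomials over a field are factorial *)

Section RingIsoTransfer.
Variables (R S : idomainType) (f : {rmorphism R -> S}).
Hypotheses (f_inj : injective f) (f_surj : forall y, exists x, f x = y).

Lemma dvdr_rmorph a b : dvdr (f a) (f b) <-> dvdr a b.
Proof.
split=> [[c fb_eq]|[c b_eq]]; last by exists (f c); rewrite b_eq rmorphM.
by have [c' fc'] := f_surj c; exists c'; apply: f_inj; rewrite rmorphM fc'.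
Qed.

Lemma unit_rmorph a : f a \is a GRing.unit <-> a \is a GRing.unit.
Proof. by rewrite -!dvdr1 -(rmorph1 f) dvdr_rmorph. Qed.

Lemma rmorph_irreducible_prime :
  (forall y : S, irreducible_elt y -> prime_elt y) ->
  forall x : R, irreducible_elt x -> prime_elt x.
Proof.
move=> S_irr_prime x [x0 Nux x_irr].
have fx_irr : irreducible_elt (f x).
  split; first by rewrite -(rmorph0 f) (inj_eq f_inj).
  - by apply/negP => /unit_rmorph; apply/negP.
  move=> b c fx_eq; have [b' fb'] := f_surj b; have [c' fc'] := f_surj c.
  have [] := x_irr b' c'; first by apply: f_inj; rewrite rmorphM fb' fc'.
    by rewrite -unit_rmorph fb'; left.
  by rewrite -unit_rmorph fc'; right.
have [_ _ fx_prime] := S_irr_prime _ fx_irr; split=> // b c.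
by rewrite -dvdr_rmorph rmorphM => /fx_prime[]/dvdr_rmorph; [left|right].
Qed.

End RingIsoTransfer.

Section MuniBijective.
Variables (n : nat) (R : nzRingType).
Local Notation widen := (widen_ord (leqnSn n)).

Definition mnm_rcons (m : 'X_{1..n}) (k : nat) : 'X_{1..n.+1} := [multinom of rcons m k].
Definition mnm_init (m : 'X_{1..n.+1}) : 'X_{1..n} := [multinom m (widen i) | i < n].

Lemma mnm_rcons_widen m k (i : 'I_n) : mnm_rcons m k (widen i) = m i.
Proof.
case: m => m; rewrite !(mnm_nth 0%N) nth_rcons.
by rewrite size_tuple /=; case: i => i /= ->.
Qed.

Lemma mnm_rcons_max m k : mnm_rcons m k ord_max = k.
Proof. by rewrite multinomE (tnth_nth 0%N) nth_rcons /= size_tuple ltnn eqxx. Qed.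

Lemma mnm_rconsK m k : mnm_init (mnm_rcons m k) = m.
Proof. by apply/mnmP => i; rewrite mnmE mnm_rcons_widen. Qed.

Lemma mnm_initK m : mnm_rcons (mnm_init m) (m ord_max) = m.
Proof.
apply/mnmP => i; have [lt_in|le_ni] := ltnP i n.
  have -> : i = widen (Ordinal lt_in) by apply/val_inj.
  by rewrite mnm_rcons_widen mnmE.
have -> : i = ord_max by apply/val_inj/eqP; rewrite eqn_leq le_ni -ltnS ltn_ord.
by rewrite mnm_rcons_max.
Qed.

Lemma coef_muni (p : {mpoly R[n.+1]}) m : ((muni p)`_(m ord_max))@_(mnm_init m) = p@_m.
Proof.
rewrite muniE coef_sum raddf_sum [in RHS](mpolyE p) raddf_sum /=.
apply: eq_bigr => m' _; rewrite coefZ coefXn mcoeffZ mcoeffX.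
have [eq_max|ne_max] := eqVneq (m ord_max) (m' ord_max); last first.
  rewrite mulr0 mcoeff0; case: eqVneq => [eq_m|_]; last by rewrite mulr0.
  by rewrite eq_m eqxx in ne_max.
rewrite mulr1 mcoeffZ mcoeffX; congr (_ * _%:R); congr (nat_of_bool _).
apply/eqP/eqP=> [eq_init|-> //].
have {}eq_init : mnm_init m' = mnm_init m := eq_init.
by rewrite -[m']mnm_initK eq_init -eq_max mnm_initK.
Qed.

Lemma muni_inj : injective (@muni n R).
Proof. by move=> p q pq; apply/mpolyP => m; rewrite -coef_muni pq coef_muni. Qed.

Lemma muni_surj (q : {poly {mpoly R[n]}}) : exists p, muni p = q.
Proof.
exists (\sum_(i < size q) \sum_(m <- msupp q`_i) (q`_i)@_m *: 'X_[mnm_rcons m i]).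
rewrite raddf_sum /= -[RHS]coefK poly_def; apply: eq_bigr => i _.
rewrite raddf_sum /= [in RHS](mpolyE q`_i) scaler_suml; apply: eq_bigr => m _.
rewrite muniZ muniE msuppX big_seq1 mcoeffX eqxx scale1r.
rewrite -/(mnm_init (mnm_rcons m i)) mnm_rconsK mnm_rcons_max.
by rewrite scalerA mul_mpolyC.
Qed.

End MuniBijective.

Section MpolyUfd.
Variable K : fieldType.

Lemma msize_le1_unit n (p : {mpoly K[n]}) : p != 0 -> (msize p <= 1)%N -> p \is a GRing.unit.
Proof.
move=> p0 /msize1_polyC p_eq; rewrite p_eq in p0 *.
by apply: (rmorph_unit (@mpolyC n K)); rewrite unitfE -(mpolyC_eq0 n).
Qed.

Lemma mpoly_ufd n : ufd {mpoly K[n]}.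
Proof.
elim: n => [|n IHn].
  move=> p p0; exists p, [::]; rewrite big_nil mulr1; split=> //.
  by apply: msize_le1_unit; rewrite // [p]nvar0_mpolyC msizeC; case: (_ != 0).
apply: (@ufd_measure _ (fun p => (msize p).-1)).
- move=> p q p0 q0; rewrite msizeM // (mpolySpred _ p0) (mpolySpred _ q0).
  by rewrite addSn addnS.
- by move=> p p0 /eqP; rewrite -subn1 subn_eq0; apply: msize_le1_unit.
apply: (@rmorph_irreducible_prime _ _ (@muni n K) (@muni_inj n K) (@muni_surj n K)).
by move=> y; apply: poly_irreducible_prime.
Qed.

End MpolyUfd.

(** * Symbols and composition *)

Section Symbol.
Variables (K : fieldType) (n : nat).
Implicit Types P X : {mpoly K[n]}.

Lemma mcoeff_pihomog k P m :
  (pihomog mdeg k P)@_m = if mdeg m == k then P@_m else 0.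
Proof.
rewrite pihomogE raddf_sum /= big_mkcond [in RHS](mpolyE P) raddf_sum /=.
case: ifP => [deg_m|deg_m]; last first.
  rewrite big1 // => m' _; case: ifP => [deg_m'|_]; rewrite ?mcoeff0 // mcoeffZ mcoeffX.
  by case: eqVneq => [eq_m|_]; [rewrite -eq_m deg_m' in deg_m | rewrite mulr0].
apply: eq_bigr => m' _; rewrite mcoeffZ mcoeffX.
have [->|_] := eqVneq m' m; first by rewrite deg_m.
by case: ifP => _; rewrite ?mcoeff0 ?mcoeffZ ?mcoeffX ?mulr0.
Qed.

Lemma SymE P : Sym P = pihomog mdeg (dord P) P.
Proof. by []. Qed.

Lemma Sym_eq0 P : (Sym P == 0) = (P == 0).
Proof.
apply/eqP/eqP => [SP0|->]; last by rewrite SymE raddf0.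
apply/eqP; apply: contraT => P0; move/(congr1 (mcoeff (mlead P))): SP0.
rewrite SymE mcoeff_pihomog mcoeff0 /dord -mlead_deg // eqxx.
by move/eqP; rewrite mleadc_eq0 (negbTE P0).
Qed.

Lemma msize_le_dord P : (msize P <= (dord P).+1)%N.
Proof. exact: leqSpred. Qed.

Lemma msize_dhomog k P : P != 0 -> P \is k.-homog -> msize P = k.+1.
Proof. by move=> P0 homP; rewrite (dhomog_uniq P0 homP (dhomog_msize homP)) -mpolySpred. Qed.

Lemma dord_Sym_homog P S k : Sym P = S -> S != 0 -> S \is k.-homog -> dord P = k.
Proof. by move=> <- S0; apply: dhomog_uniq S0 _; rewrite SymE pihomogP. Qed.

Lemma msize_pihomog_le k P : (msize (pihomog mdeg k P) <= msize P)%N.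
Proof.
have [->|X0] := eqVneq (pihomog mdeg k P) 0; first by rewrite msize0.
rewrite -(mlead_deg X0); apply: msize_mdeg_lt.
have := mlead_supp X0; rewrite !mcoeff_msupp mcoeff_pihomog.
by case: ifP => //; rewrite eqxx.
Qed.

Lemma ord_lt_msize X (d d0 d1 : nat) :
  ord_lt X ((d%:Z - d0%:Z) - (d%:Z - d1%:Z)) -> (msize X <= d1 - d0)%N.
Proof.
rewrite /ord_lt; have [->|X0] /= := eqVneq X 0; first by rewrite msize0.
by rewrite /dord (mpolySpred _ X0) /=; move: (msize X).-1 => k; lia.
Qed.

End Symbol.

Lemma morph_addB (V W : zmodType) (f : V -> W) :
  {morph f : a b / a + b} -> {morph f : a b / a - b}.
Proof. by move=> fD a b; apply: (addIr (f b)); rewrite -fD !subrK. Qed.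

Section Composition.
Variables (K : fieldType) (n : nat) (der : 'I_n -> K -> K).
Hypothesis derD : forall i, {morph der i : a b / a + b}.
Implicit Types P Q : {mpoly K[n]}.
Local Notation dcomp := (dcomp der).

Lemma derID I : {morph derI der I : a b / a + b}.
Proof.
move=> a b; rewrite /derI; elim: (enum 'I_n) => //= i s ->.
by elim: (I i) => //= k ->; rewrite derD.
Qed.

Lemma derIB I : {morph derI der I : a b / a - b}.
Proof. exact: morph_addB (derID I). Qed.

Lemma derI0 I : derI der I 0 = 0.
Proof. by have := derIB I 0 0; rewrite subrr => ->; rewrite subrr. Qed.

Lemma derI_mnm0 a : derI der 0%MM a = a.
Proof. by rewrite /derI; elim: (enum 'I_n) => //= i s ->; rewrite mnm0E. Qed.

Lemma mdegB_le (I J : 'X_{1..n}) : (I <= J)%MM -> mdeg J = (mdeg (J - I) + mdeg I)%N.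
Proof. by move=> le_IJ; rewrite -mdegD submK. Qed.

Lemma mbin0 (J : 'X_{1..n}) : mbin J 0%MM = 1%N.
Proof. by rewrite /mbin big1 // => i _; rewrite mnm0E bin0. Qed.

Definition dcomp_term P Q (J M : 'X_{1..n}) : {mpoly K[n]} :=
  \sum_(I : 'X_{1..n < (mdeg J).+1} | (val I <= J)%MM)
    (P@_J * (mbin J (val I))%:R * derI der (val I) (Q@_M)) *: 'X_[(J - val I) + M].

Lemma big_msupp_bounded (V : zmodType) P k (F : 'X_{1..n} -> V) :
  (msize P <= k)%N -> (forall m, P@_m = 0 -> F m = 0) ->
  \sum_(m <- msupp P) F m = \sum_(m : 'X_{1..n < k}) F m.
Proof.
move=> le_Pk F0; rewrite (big_mksub 'X_{1..n < k}) //=; first last.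
- by move=> m /msize_mdeg_lt /leq_trans; apply.
- exact: msupp_uniq.
by rewrite big_rmcond //= => m /memN_msupp_eq0 /F0.
Qed.

Lemma dcomp_bounded k P Q : (msize P <= k)%N -> (msize Q <= k)%N ->
  dcomp P Q = \sum_(J : 'X_{1..n < k}) \sum_(M : 'X_{1..n < k}) dcomp_term P Q J M.
Proof.
move=> le_Pk le_Qk; rewrite /dcomp (big_msupp_bounded le_Pk) => [|J PJ0].
  apply: eq_bigr => J _; rewrite (big_msupp_bounded le_Qk) // => M QM0.
  by rewrite /dcomp_term big1 // => I _; rewrite QM0 derI0 mulr0 scale0r.
by rewrite big1 // => M _; rewrite big1 // => I _; rewrite PJ0 !mul0r scale0r.
Qed.

Lemma dcompBl P1 P2 Q : dcomp (P1 - P2) Q = dcomp P1 Q - dcomp P2 Q.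
Proof.
pose k := (msize P1 + msize P2 + msize Q)%N.
have le_B : (msize (P1 - P2) <= k)%N.
  by apply: leq_trans (msizeD_le _ _) _; rewrite msizeN /k; lia.
rewrite !(@dcomp_bounded k) // ?/k; try lia.
rewrite -sumrB; apply: eq_bigr => J _; rewrite -sumrB; apply: eq_bigr => M _.
rewrite /dcomp_term -sumrB; apply: eq_bigr => I _.
by rewrite mcoeffB !mulrBl scalerBl.
Qed.

Lemma dcompBr P Q1 Q2 : dcomp P (Q1 - Q2) = dcomp P Q1 - dcomp P Q2.
Proof.
pose k := (msize P + msize Q1 + msize Q2)%N.
have le_B : (msize (Q1 - Q2) <= k)%N.
  by apply: leq_trans (msizeD_le _ _) _; rewrite msizeN /k; lia.
rewrite !(@dcomp_bounded k) // ?/k; try lia.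
rewrite -sumrB; apply: eq_bigr => J _; rewrite -sumrB; apply: eq_bigr => M _.
rewrite /dcomp_term -sumrB; apply: eq_bigr => I _.
by rewrite mcoeffB derIB !mulrBr scalerBl.
Qed.

Lemma dcomp0l Q : dcomp 0 Q = 0.
Proof. by rewrite /dcomp msupp0 big_nil. Qed.

Lemma pihomogZX k (c : K) (m : 'X_{1..n}) :
  pihomog mdeg k (c *: 'X_[m]) = if mdeg m == k then c *: 'X_[m] else 0.
Proof. by rewrite linearZ /= pihomogX; case: ifP => _; rewrite ?scaler0. Qed.

(* Only the Leibniz term with [I = 0] keeps the full degree [mdeg J + mdeg M]. *)
Lemma pihomog_dcomp_term P Q a b (J M : 'X_{1..n}) : (mdeg J <= a)%N -> (mdeg M <= b)%N ->
  pihomog mdeg (a + b) (dcomp_term P Q J M) =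
  if (mdeg J == a) && (mdeg M == b) then (P@_J * Q@_M) *: 'X_[J + M] else 0.
Proof.
move=> le_Ja le_Mb; rewrite /dcomp_term raddf_sum /=.
rewrite (bigD1 (@bm0 n (mdeg J))) /=; last by apply/mnm_lepP => i; rewrite mnm0E.
rewrite big1 ?addr0 => [|I /andP[le_IJ I0]]; last first.
  have deg_I : (0 < mdeg (I : 'X_{1..n}))%N.
    by rewrite lt0n mdeg_eq0; apply: contra I0 => /eqP I0; apply/eqP/val_inj.
  have deg_J := mdegB_le le_IJ.
  by rewrite pihomogZX mdegD; case: eqP => // ?; lia.
rewrite pihomogZX subm0 mdegD mbin0 derI_mnm0 mulr1.
by case: (eqVneq (mdeg J) a) => [<-|?]; case: (eqVneq (mdeg M) b) => [<-|?];
  rewrite ?eqxx //; case: eqP => // ?; lia.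
Qed.

Lemma pihomog_dcomp P Q a b : (msize P <= a.+1)%N -> (msize Q <= b.+1)%N ->
  pihomog mdeg (a + b) (dcomp P Q) = pihomog mdeg a P * pihomog mdeg b Q.
Proof.
move=> le_Pa le_Qb.
have -> : pihomog mdeg a P * pihomog mdeg b Q = \sum_(J <- msupp P) \sum_(M <- msupp Q)
    if (mdeg J == a) && (mdeg M == b) then (P@_J * Q@_M) *: 'X_[J + M] else 0.
  rewrite !pihomogE big_mkcond mulr_suml; apply: eq_bigr => J _.
  rewrite [X in _ * X]big_mkcond mulr_sumr; apply: eq_bigr => M _.
  case: (mdeg J == a); case: (mdeg M == b); rewrite ?mul0r ?mulr0 //.
  by rewrite -scalerAl -scalerAr scalerA mpolyXD.
rewrite /dcomp raddf_sum big_seq [RHS]big_seq; apply: eq_bigr => J PJ.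
rewrite raddf_sum big_seq [RHS]big_seq; apply: eq_bigr => M QM.
apply: pihomog_dcomp_term.
- by have := msize_mdeg_lt PJ; lia.
- by have := msize_mdeg_lt QM; lia.
Qed.

Lemma dcomp0r P : dcomp P 0 = 0.
Proof. by rewrite /dcomp big1 // => J _; rewrite msupp0 big_nil. Qed.

Lemma dcomp_neq0 P Q : P != 0 -> Q != 0 -> dcomp P Q != 0.
Proof.
move=> P0 Q0; apply: contraNneq (_ : Sym P * Sym Q != 0) => [PQ0|].
  by rewrite !SymE -pihomog_dcomp ?msize_le_dord // PQ0 raddf0.
by rewrite mulf_neq0 // Sym_eq0.
Qed.

End Composition.

(** * Uniqueness of extensions *)

Section SmallSolutions.
Variables (K : fieldType) (n : nat).
Implicit Types S X Y : {mpoly K[n]}.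

Lemma is_gcd_coprime S0 S1 S2 A B : is_gcd S0 S1 S2 -> S0 != 0 ->
  S1 = A * S0 -> S2 = B * S0 ->
  forall H, dvdr H A -> dvdr H B -> H \is a GRing.unit.
Proof.
move=> [_ _ gcd_max] S00 S1_eq S2_eq H [a A_eq] [b B_eq].
have [||w S0_eq] := gcd_max (H * S0).
- by exists a; rewrite S1_eq A_eq mulrA.
- by exists b; rewrite S2_eq B_eq mulrA.
by apply/dvdr1; exists w; apply: (mulIf S00); rewrite mul1r -mulrA -S0_eq.
Qed.

(* The cofactor [S1 / S0] divides [X], and has degree [d1 - d0]. *)
Lemma gcd_small_solution_eq0 S0 S1 S2 X Y (d0 d1 : nat) :
  is_gcd S0 S1 S2 -> S1 != 0 -> S1 \is d1.-homog -> S0 \is d0.-homog ->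
  X * S2 + S1 * Y = 0 -> (msize X <= d1 - d0)%N -> X = 0.
Proof.
move=> S_gcd S10 hom1 hom0 XY0 le_X; have [[A S1_eq] [B S2_eq] _] := S_gcd.
have S00 : S0 != 0 by apply: contraNneq S10 => S00; rewrite S1_eq S00 mulr0.
have A0 : A != 0 by apply: contraNneq S10 => A0; rewrite S1_eq A0 mul0r.
have XB : dvdr A (X * B).
  exists (- Y); apply: (mulIf S00); apply/eqP.
  rewrite /= -[X * B * S0]mulrA -S2_eq -mulrA -S1_eq mulNr -addr_eq0.
  by rewrite [Y * S1]mulrC XY0.
have [W X_eq] := ufd_gauss (@mpoly_ufd K n) A0 (is_gcd_coprime S_gcd S00 S1_eq S2_eq) XB.
apply/eqP; apply: contraT => X0.
have W0 : W != 0 by apply: contraNneq X0 => W0; rewrite X_eq W0 mul0r.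
move: le_X (msize_dhomog S10 hom1) (msize_dhomog S00 hom0).
rewrite X_eq S1_eq !msizeM // (mpolySpred _ W0) (mpolySpred _ A0).
by move: (msize W).-1 (msize A).-1 (msize S0) => w a s; lia.
Qed.

End SmallSolutions.

Lemma msizeB_common_le (K : fieldType) (n : nat) (F G G' : {mpoly K[n]}) (b : nat) :
  (msize (F - G) <= b)%N -> (msize (F - G') <= b)%N -> (msize (G - G') <= b)%N.
Proof.
have -> : G - G' = (F - G') - (F - G) by rewrite [RHS]addrC opprB addrA subrK.
by move=> le_G le_G'; apply: leq_trans (msizeD_le _ _) _; rewrite msizeN geq_max le_G le_G'.
Qed.

Section LinearizedEquation.
Variables (K : fieldType) (n : nat) (der : 'I_n -> K -> K).

(* Compare the components of the largest degree [T] reached by the two summands: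
   they give [X * S2 + S1 * Y = 0] with [X] a homogeneous part of [P1]. *)
Lemma linearized_small_solution (G1 G2 P1 P2 S0 S1 S2 : {mpoly K[n]}) (d0 d1 d2 : nat) :
  Sym G1 = S1 -> Sym G2 = S2 -> S1 != 0 -> S2 != 0 ->
  S1 \is d1.-homog -> S2 \is d2.-homog -> is_gcd S0 S1 S2 -> S0 \is d0.-homog ->
  (msize P1 <= d1 - d0)%N -> dcomp der P1 G2 + dcomp der G1 P2 = 0 ->
  P1 = 0 /\ P2 = 0.
Proof.
move=> sym1 sym2 S10 S20 hom1 hom2 S_gcd hom0 le_P1 sum0.
have dG1 := dord_Sym_homog sym1 S10 hom1.
have dG2 := dord_Sym_homog sym2 S20 hom2.
have G10 : G1 != 0 by rewrite -Sym_eq0 sym1.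
have G20 : G2 != 0 by rewrite -Sym_eq0 sym2.
suff [P10|P20] : P1 = 0 \/ P2 = 0.
- move: sum0; rewrite P10 dcomp0l add0r => /eqP comp0; split=> //.
  by apply/eqP; apply: contraTT comp0 => /(dcomp_neq0 der G10).
- move: sum0; rewrite P20 dcomp0r addr0 => /eqP comp0; split=> //.
  by apply/eqP; apply: contraTT comp0 => /(dcomp_neq0 der)/(_ G20).
pose T := maxn (dord P1 + d2) (d1 + dord P2).
have top1 : pihomog mdeg T (dcomp der P1 G2) = pihomog mdeg (T - d2) P1 * S2.
  rewrite -sym2 SymE dG2 -(pihomog_dcomp der); first by congr pihomog; rewrite /T; lia.
  - by apply: leq_trans (msize_le_dord _) _; rewrite /T; lia.
  - by rewrite -dG2 msize_le_dord.
have top2 : pihomog mdeg T (dcomp der G1 P2) = S1 * pihomog mdeg (T - d1) P2.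
  rewrite -sym1 SymE dG1 -(pihomog_dcomp der); first by congr pihomog; rewrite /T; lia.
  - by rewrite -dG1 msize_le_dord.
  - by apply: leq_trans (msize_le_dord _) _; rewrite /T; lia.
have XY0 : pihomog mdeg (T - d2) P1 * S2 + S1 * pihomog mdeg (T - d1) P2 = 0.
  by rewrite -top1 -top2 -raddfD sum0 raddf0.
have X0 := gcd_small_solution_eq0 S_gcd S10 hom1 hom0 XY0
  (leq_trans (msize_pihomog_le _ _) le_P1).
move: XY0; rewrite X0 mul0r add0r => /eqP; rewrite mulf_eq0 (negbTE S10) /= => /eqP Y0.
have [le_T|lt_T] := leqP (d1 + dord P2) (dord P1 + d2).
  by left; apply/eqP; rewrite -Sym_eq0 SymE -X0; apply/eqP; congr pihomog; rewrite /T; lia.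
by right; apply/eqP; rewrite -Sym_eq0 SymE -Y0; apply/eqP; congr pihomog; rewrite /T; lia.
Qed.

End LinearizedEquation.

Theorem mainTheorem1 (K : fieldType) (n : nat) (der : 'I_n -> K -> K)
  (L S1 S2 S0 : {mpoly K[n]}) (d d1 d2 d0 : nat) :
  is_comm_derivations der ->
  L != 0 -> dord L = d ->
  Sym L = S1 * S2 ->
  S1 \is d1.-homog -> S2 \is d2.-homog ->
  is_gcd S0 S1 S2 -> S0 \is d0.-homog ->
  forall F1 F2 : {mpoly K[n]},
    Sym F1 = S1 -> Sym F2 = S2 ->
    ord_lt (L - dcomp der F1 F2) (d%:Z - d0%:Z) ->
  forall G1 G2 G1' G2' : {mpoly K[n]},
    L = dcomp der G1 G2 -> Sym G1 = S1 -> Sym G2 = S2 ->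
    ord_lt (F1 - G1) ((d%:Z - d0%:Z) - (d%:Z - d1%:Z)) ->
    ord_lt (F2 - G2) ((d%:Z - d0%:Z) - (d%:Z - d2%:Z)) ->
    L = dcomp der G1' G2' -> Sym G1' = S1 -> Sym G2' = S2 ->
    ord_lt (F1 - G1') ((d%:Z - d0%:Z) - (d%:Z - d1%:Z)) ->
    ord_lt (F2 - G2') ((d%:Z - d0%:Z) - (d%:Z - d2%:Z)) ->
    G1 = G1' /\ G2 = G2'.
Proof.
move=> [derD _ _] L0 _ symL hom1 hom2 S_gcd hom0 F1 F2 _ _ _ G1 G2 G1' G2'
  L_eq _ sym2 close1 _ L_eq' sym1' _ close1' _.
have [S10 S20] : S1 != 0 /\ S2 != 0.
  by apply/andP; rewrite -negb_or -mulf_eq0 -symL Sym_eq0.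
have le_P1 : (msize (G1 - G1') <= d1 - d0)%N.
  exact: msizeB_common_le (ord_lt_msize close1) (ord_lt_msize close1').
have sum0 : dcomp der (G1 - G1') G2 + dcomp der G1' (G2 - G2') = 0.
  by rewrite dcompBl // dcompBr // -L_eq -L_eq' addrA subrK subrr.
have [P10 P20] := linearized_small_solution sym1' sym2 S10 S20 hom1 hom2
  S_gcd hom0 le_P1 sum0.
by split; apply/eqP; rewrite -subr_eq0; apply/eqP.
Qed.
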